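(* Let $p_1=3, p_2=5, p_3=7, p_4=11, p_5=13,\dots$ be the odd prime numbers in increasing order. Then for all $m,k\in\mathbb{N}$, $$\prod_{n=1}^m\left(\frac{p_n^{2k}}{p_n^{2k}-1}\right) > \sum_{n=0}^m \frac{1}{(2n+1)^{2k}}.$$
   Context: $\mathbb{N}=\{1,2,3,\dots\}$. *)

From mathcomp Require Import all_boot all_order all_algebra.
Set Implicit Arguments. Unset Strict Implicit. Unset Printing Implicit Defensive.

Lemma exists_prime_above (m : nat) : exists p, (m < p) && prime p.
Proof. by case: (prime_above m) => p H1 H2; exists p; rewrite H1 H2. Qed.

Definition next_prime (m : nat) : nat := ex_minn (exists_prime_above m).

(* odd_prime n = p_n, the n-th odd prime (1-indexed): p_1 = 3, p_2 = 5, ...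
   odd_prime 0 = 2 is just an auxiliary seed value. *)
Fixpoint odd_prime (n : nat) : nat :=
  match n with
  | 0 => 2
  | n'.+1 => next_prime (odd_prime n')
  end.

From mathcomp Require Import all_boot all_order all_algebra zify ring.
Import Order.TTheory GRing.Theory Num.Theory.

(* Let g be completely multiplicative, positive, and below 1 at primes, and let
   S(ps, B) be the sum of g j over the j <= B all of whose prime factors lie in
   ps.  Splitting off the multiples of p gives
   S(p :: ps, B) <= S(ps, B) + g p * S(p :: ps, B / p), which mirrors the identity
   E(p :: ps) = E(ps) + g p * E(p :: ps) for the Euler product
   E(ps) = prod_(p in ps) (1 - g p)^-1; induction on ps and strong induction on B
   give S(ps, B) < E(ps) for nonempty ps.  Take g j = j^-2k and ps the first m odd
   primes: since p_m >= 2m + 1, every odd j <= 2m + 1 is ps-smooth, so the sum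
   of j^-2k over odd j <= 2m + 1 is at most S(ps, 2m + 1). *)

Definition smooth (ps : seq nat) (j : nat) : bool :=
  (0 < j) && all (mem ps) (primes j).

Lemma smooth_nil j : smooth [::] j = (j == 1).
Proof.
rewrite /smooth; case: j => [|[|j]] //=.
by have := primes_eq0 j.+2; case: primes.
Qed.

Lemma smooth_consM p ps c : prime p ->
  smooth (p :: ps) (p * c) = smooth (p :: ps) c.
Proof.
move=> pr_p; rewrite /smooth muln_gt0 prime_gt0 //=; case: (posnP c) => [-> //|c_gt0] /=.
have primes_pc : primes (p * c) =i primes p ++ primes c.
  by move=> q; rewrite mem_cat primesM // prime_gt0.
by rewrite (eq_all_r primes_pc) all_cat primes_prime //= inE eqxx.
Qed.

Lemma smooth_cons_ndvd p ps j : ~~ (p %| j) -> smooth (p :: ps) j -> smooth ps j.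
Proof.
move=> p_ndvd_j /andP[j_gt0 /allP Hj]; rewrite /smooth j_gt0; apply/allP => q q_j.
have := Hj q q_j; rewrite inE => /orP[/eqP q_p|//].
by move: q_j p_ndvd_j; rewrite mem_primes q_p => /and3P[_ _ ->].
Qed.

Lemma next_primeP m : [/\ m < next_prime m, prime (next_prime m) &
  forall r, m < r -> prime r -> next_prime m <= r].
Proof.
rewrite /next_prime; case: ex_minnP => q /andP[m_lt_q pr_q] q_min; split=> // r *.
by apply: q_min; apply/andP.
Qed.

Lemma odd_prime_prime n : prime (odd_prime n).
Proof. by case: n => [|n] //=; case: (next_primeP (odd_prime n)). Qed.

Lemma odd_prime_ge n : 2 * n + 1 <= odd_prime n.
Proof.
elim: n => [//|n IH] /=; case: (next_primeP (odd_prime n)) => lt_next pr_next _.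
have /even_prime[next2|odd_next] := pr_next.
  by have := prime_gt1 (odd_prime_prime n); lia.
by have := odd_double_half (next_prime (odd_prime n)); rewrite odd_next; lia.
Qed.

Lemma odd_prime_onto m r : prime r -> 2 < r -> r <= odd_prime m ->
  exists2 i, 0 < i <= m & r = odd_prime i.
Proof.
move=> pr_r r_gt2; elim: m => [|m IH] /=; first by lia.
case: (next_primeP (odd_prime m)) => _ _ next_min r_le.
have [r_le_m|r_gt_m] := leqP r (odd_prime m).
  by case: (IH r_le_m) => i i_m ->; exists i => //; lia.
by exists m.+1; [lia | apply/eqP; rewrite eqn_leq r_le next_min].
Qed.

Lemma smooth_odd_primes m j : odd j -> j <= 2 * m + 1 ->
  smooth [seq odd_prime i | i <- iota 1 m] j.
Proof.
move=> odd_j j_le; have j_gt0 : 0 < j by case: (j) odd_j.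
rewrite /smooth j_gt0; apply/allP => r; rewrite mem_primes => /and3P[pr_r _ r_j].
have r_gt2 : 2 < r.
  have /even_prime[r2|odd_r] := pr_r; last by have := prime_gt1 pr_r; case: (r) odd_r => [|[|[]]].
  by move: r_j odd_j; rewrite r2 => /dvdn_odd/[apply].
have r_le : r <= odd_prime m by have := dvdn_leq j_gt0 r_j; have := odd_prime_ge m; lia.
case: (odd_prime_onto m r pr_r r_gt2 r_le) => i i_m ->.
by apply: map_f; rewrite mem_iota; lia.
Qed.

Local Open Scope ring_scope.

Lemma ler_sum_subpred (R : numDomainType) (I : eqType) (r : seq I) (P Q : pred I)
    (F : I -> R) :
  (forall i, Q i -> 0 <= F i) -> (forall i, i \in r -> P i -> Q i) ->
  \sum_(i <- r | P i) F i <= \sum_(i <- r | Q i) F i.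
Proof.
move=> F_ge0 PQ; rewrite [leLHS]big_mkcond [leRHS]big_mkcond.
rewrite [leLHS]big_seq [leRHS]big_seq; apply: ler_sum => i r_i.
by case: ifP => [/(PQ i r_i)-> //|_]; case: ifP => // /F_ge0.
Qed.

Section EulerProduct.

Context {R : numFieldType} (g : nat -> R).
Hypothesis gM : forall a b, g (a * b)%N = g a * g b.
Hypothesis g1 : g 1%N = 1.
Hypothesis g_gt0 : forall j, (0 < j)%N -> 0 < g j.
Hypothesis g_prime_lt1 : forall p, prime p -> g p < 1.

Definition smooth_sum (ps : seq nat) (B : nat) : R :=
  \sum_(0 <= j < B.+1 | smooth ps j) g j.

Definition euler_prod (ps : seq nat) : R := \prod_(p <- ps) (1 - g p)^-1.

Lemma smooth_sum_nil B : smooth_sum [::] B <= 1.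
Proof.
rewrite /smooth_sum (eq_bigl (pred1 1%N)) => [|j]; last exact: smooth_nil.
by rewrite big_nat1_eq; case: ifP; rewrite ?g1 ?ler01.
Qed.

Lemma smooth_sum_dvd p ps B : prime p ->
  \sum_(0 <= j < B.+1 | smooth (p :: ps) j && (p %| j)%N) g j
  = g p * smooth_sum (p :: ps) (B %/ p).
Proof.
move=> pr_p; rewrite /smooth_sum; elim: B => [|B IH].
  by rewrite div0n big_mkcond big_nat1 [in RHS]big_mkcond big_nat1 mulr0.
rewrite big_mkcond big_nat_recr //= -big_mkcond IH divnS ?prime_gt0 //.
have [p_dvd|_] := boolP (p %| B.+1)%N; last by rewrite andbF addr0.
have B1E : B.+1 = (p * (B %/ p).+1)%N.
  by rewrite -[in LHS](divnK p_dvd) divnS ?prime_gt0 // p_dvd mulnC.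
rewrite andbT add1n [in RHS]big_mkcond big_nat_recr //= -big_mkcond mulrDr.
by congr (_ + _); rewrite B1E smooth_consM // gM; case: ifP; rewrite ?mulr0.
Qed.

Lemma smooth_sum_cons_le p ps B : prime p ->
  smooth_sum (p :: ps) B <= smooth_sum ps B + g p * smooth_sum (p :: ps) (B %/ p).
Proof.
move=> pr_p; rewrite {1}/smooth_sum (bigID (dvdn p)) /= smooth_sum_dvd //.
rewrite addrC lerD2r; apply: ler_sum_subpred => [j /andP[/g_gt0/ltW] //|j _].
by case/andP=> /[swap]; apply: smooth_cons_ndvd.
Qed.

Lemma euler_prod_gt0 ps : all prime ps -> 0 < euler_prod ps.
Proof.
move=> /allP ps_prime; rewrite /euler_prod big_seq; apply: prodr_gt0 => p /ps_prime.
by move=> /g_prime_lt1; rewrite invr_gt0 subr_gt0.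
Qed.

Lemma euler_prod_cons p ps : prime p ->
  euler_prod (p :: ps) = euler_prod ps + g p * euler_prod (p :: ps).
Proof.
move=> /g_prime_lt1 gp_lt1; rewrite /euler_prod big_cons.
have : 1 - g p != 0 by rewrite subr_eq0 eq_sym lt_eqF.
by move=> gp_neq1; field.
Qed.

Lemma smooth_sum_cons_lt p ps : all prime (p :: ps) ->
    (forall B, smooth_sum ps B <= euler_prod ps) ->
  forall B, smooth_sum (p :: ps) B < euler_prod (p :: ps).
Proof.
move=> pps_prime le_ps; have /andP[pr_p _] := pps_prime.
elim/ltn_ind => -[_|B IH].
  by rewrite /smooth_sum big_mkcond big_nat1 euler_prod_gt0.
apply: le_lt_trans (smooth_sum_cons_le p ps B.+1 pr_p) _.
rewrite [ltRHS]euler_prod_cons //; apply: ler_ltD => //.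
by rewrite ltr_pM2l ?g_gt0 ?prime_gt0 // IH // ltn_Pdiv ?prime_gt1.
Qed.

Lemma smooth_sum_le ps B : all prime ps -> smooth_sum ps B <= euler_prod ps.
Proof.
elim: ps B => [|p ps IH] B ps_prime.
  by rewrite /euler_prod big_nil smooth_sum_nil.
have /andP[_ /IH le_ps] := ps_prime.
exact/ltW/smooth_sum_cons_lt.
Qed.

Lemma smooth_sum_lt ps B : all prime ps -> ps != [::] ->
  smooth_sum ps B < euler_prod ps.
Proof.
case: ps => [//|p ps] pps_prime _; have /andP[_ ps_prime] := pps_prime.
by apply: smooth_sum_cons_lt => // B'; apply: smooth_sum_le.
Qed.

End EulerProduct.

Lemma sum_odd (V : nmodType) (F : nat -> V) n :
  \sum_(0 <= i < n.+1) F (2 * i + 1)%N = \sum_(0 <= j < (2 * n + 1).+1 | odd j) F j.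
Proof.
elim: n => [|n IH]; first by rewrite big_nat1 big_mkcond !big_nat_recr //= big_geq // !add0r.
rewrite big_nat_recr //= IH.
have -> : (2 * n.+1 + 1).+1 = (2 * n + 1).+3 by lia.
rewrite [RHS]big_mkcond big_nat_recr // big_nat_recr //= -big_mkcond oddD oddM /= addr0.
by congr (_ + F _); lia.
Qed.

Definition zeta_term (R : numFieldType) (s j : nat) : R := (j%:R ^+ s)^-1.

Section ZetaTerm.
Context {R : numFieldType} (s : nat).

Lemma zeta_termM a b : zeta_term R s (a * b) = zeta_term R s a * zeta_term R s b.
Proof. by rewrite /zeta_term natrM exprMn invfM. Qed.

Lemma zeta_term1 : zeta_term R s 1 = 1.
Proof. by rewrite /zeta_term expr1n invr1. Qed.

Lemma zeta_term_gt0 j : (0 < j)%N -> 0 < zeta_term R s j.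
Proof. by move=> j_gt0; rewrite /zeta_term invr_gt0 exprn_gt0 // ltr0n. Qed.

Lemma zeta_term_lt1 j : (0 < s)%N -> (1 < j)%N -> zeta_term R s j < 1.
Proof.
move=> s_gt0 j_gt1; rewrite /zeta_term invf_lt1 ?exprn_gt0 ?ltr0n 1?ltnW //.
by rewrite exprn_egt1 -?lt0n ?ltr1n.
Qed.

Lemma euler_factor_zeta_term j : (1 < j)%N -> (0 < s)%N ->
  (1 - zeta_term R s j)^-1 = j%:R ^+ s / (j%:R ^+ s - 1).
Proof.
move=> j_gt1 s_gt0; have js_gt1 : 1 < j%:R ^+ s :> R by rewrite exprn_egt1 -?lt0n ?ltr1n.
have js_neq0 : j%:R ^+ s != 0 :> R by rewrite gt_eqF // (lt_trans ltr01).
have js_neq1 : j%:R ^+ s - 1 != 0 :> R by rewrite subr_eq0 gt_eqF.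
by rewrite /zeta_term; field; rewrite js_neq0 js_neq1.
Qed.

End ZetaTerm.

Theorem proposition2p3 (m k : nat) (hm : (1 <= m)%N) (hk : (1 <= k)%N) :
  \prod_(1 <= n < m.+1) ((odd_prime n)%:R ^+ (2 * k)
                          / ((odd_prime n)%:R ^+ (2 * k) - 1) : rat)
  > \sum_(0 <= n < m.+1) 1 / ((2 * n + 1)%:R ^+ (2 * k) : rat).
Proof.
have s_gt0 : (0 < 2 * k)%N by rewrite muln_gt0.
pose g := zeta_term rat (2 * k); pose ps := [seq odd_prime n | n <- iota 1 m].
have ps_prime : all prime ps by apply/allP => _ /mapP[n _ ->]; apply: odd_prime_prime.
have ps_neq0 : ps != [::] by rewrite -size_eq0 size_map size_iota -lt0n.
have -> : \prod_(1 <= n < m.+1) ((odd_prime n)%:R ^+ (2 * k)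
             / ((odd_prime n)%:R ^+ (2 * k) - 1) : rat) = euler_prod g ps.
  rewrite /euler_prod big_map /index_iota subn1; apply: eq_bigr => n _.
  by rewrite euler_factor_zeta_term ?prime_gt1 ?odd_prime_prime.
have -> : \sum_(0 <= n < m.+1) 1 / ((2 * n + 1)%:R ^+ (2 * k) : rat)
          = \sum_(0 <= j < (2 * m + 1).+1 | odd j) g j.
  by rewrite -sum_odd; apply: eq_bigr => n _; rewrite div1r.
have g_prime_lt1 p : prime p -> g p < 1 by move/prime_gt1; apply: zeta_term_lt1.
apply: le_lt_trans (smooth_sum_lt g (zeta_termM _) (zeta_term1 _) (zeta_term_gt0 _)
  g_prime_lt1 ps (2 * m + 1) ps_prime ps_neq0).
apply: ler_sum_subpred => [j /andP[j_gt0 _]|j]; first exact/ltW/zeta_term_gt0.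
by rewrite mem_index_iota ltnS => /andP[_ j_le] odd_j; apply: smooth_odd_primes.
Qed.
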